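(* Let $E,F$ be Banach spaces over $\mathbb{K}$ and $m\in\mathbb{N}$. If the polynomial $P\in\mathcal{P}(^mE;F)$ has finite rank, then $\Delta^n_kP$ is of finite type for all $k,n\in\mathbb{N}$.
   Context: Banach spaces are over $\mathbb{K}=\mathbb{R}$ or $\mathbb{C}$. $\mathcal{P}(^jX;Y)$ is the space of continuous $j$-homogeneous polynomials $X\to Y$, $\mathcal{P}(^jX)=\mathcal{P}(^jX;\mathbb{K})$. For $P\in\mathcal{P}(^mE;F)$, $\Delta^n_kP\in\mathcal{P}(^n\mathcal{P}(^kF);\mathcal{P}(^{mnk}E))$ is defined by $\Delta^n_kP(q)(x)=q(P(x))^n$. A polynomial $Q\in\mathcal{P}(^jX;Y)$ has finite rank if the linear span of its range is finite dimensional; it is of finite type if it is a finite linear combination of polynomials of the form $x\mapsto\varphi(x)^jb$ with $\varphi\in X^*$, $b\in Y$. *)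

From HB Require Import structures.
From mathcomp Require Import all_boot all_order all_algebra.
From mathcomp Require Import all_classical all_reals all_analysis.
Import numFieldNormedType.Exports.
Import Order.TTheory GRing.Theory Num.Theory.

Set Implicit Arguments.
Unset Strict Implicit.
Unset Printing Implicit Defensive.

Local Open Scope ring_scope.

Definition upd (X : Type) (j : nat) (v : 'I_j -> X) (i : 'I_j) (z : X)
  : 'I_j -> X := fun l => if l == i then z else v l.

Definition multilinear (K : numFieldType) (X Y : lmodType K) (j : nat)
  (A : ('I_j -> X) -> Y) : Prop :=
  forall (i : 'I_j) (v : 'I_j -> X) (a : K) (x y : X),
    A (upd v i (a *: x + y)) = a *: A (upd v i x) + A (upd v i y).

Definition homogeneous_poly (K : numFieldType) (X Y : lmodType K) (j : nat)
  (P : X -> Y) : Prop :=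
  exists A : ('I_j -> X) -> Y, multilinear A /\ forall x, P x = A (fun _ => x).

Definition cont_hpoly (K : numFieldType) (X Y : normedModType K) (j : nat)
  (P : X -> Y) : Prop :=
  homogeneous_poly j P /\ continuous P.

(* Q has finite rank: the linear span of its range is finite dimensional,
   i.e. the range lies in the span of finitely many vectors b_0..b_{r-1}. *)
Definition finite_rank (K : numFieldType) (X Y : lmodType K) (Q : X -> Y) : Prop :=
  exists (r : nat) (b : 'I_r -> Y),
    forall x, exists c : 'I_r -> K, Q x = \sum_(i < r) c i *: b i.

Definition Pk (K : numFieldType) (F : normedModType K) (k : nat) (q : F -> K^o)
  : Prop := @cont_hpoly K F K^o k q.

(* phi is an element of the dual P(^k F)^*: a linear functional on the
   space P(^k F), continuous for its norm ||q|| = sup_{||y||<=1} |q y|,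
   i.e. there is C with |phi q| <= C ||q|| (written without sup:
   |phi q| <= C * M whenever M bounds |q| on the closed unit ball). *)
Definition Pk_dual (K : numFieldType) (F : normedModType K) (k : nat)
  (phi : (F -> K^o) -> K) : Prop :=
  (forall (a : K) (q1 q2 : F -> K^o), Pk k q1 -> Pk k q2 ->
      phi (fun y => a * q1 y + q2 y) = a * phi q1 + phi q2) /\
  exists C : K, 0 <= C /\
    forall (q : F -> K^o) (M : K), Pk k q -> 0 <= M ->
      (forall y : F, `|y| <= 1 -> `|q y| <= M) -> `|phi q| <= C * M.

Definition Delta (K : numFieldType) (E F : normedModType K) (n : nat)
  (P : E -> F) (q : F -> K^o) : E -> K^o := fun x => q (P x) ^+ n.

Definition Delta_finite_type (K : numFieldType) (E F : normedModType K)
  (m n k : nat) (P : E -> F) : Prop :=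
  exists (s : nat) (phi : 'I_s -> (F -> K^o) -> K) (b : 'I_s -> E -> K^o),
    (forall i, Pk_dual k (phi i)) /\
    (forall i, @cont_hpoly K E K^o (m * n * k) (b i)) /\
    forall q : F -> K^o, Pk k q ->
      Delta n P q = (fun x => \sum_(i < s) phi i q ^+ n * b i x).

From HB Require Import structures.
From mathcomp Require Import all_boot all_order all_algebra.
From mathcomp Require Import all_classical all_reals all_analysis.
From mathcomp Require Import zify.
Import numFieldNormedType.Exports.
Import Order.TTheory GRing.Theory Num.Theory.
Set Implicit Arguments.
Unset Strict Implicit.
Unset Printing Implicit Defensive.
Local Open Scope ring_scope.

(* Write P x = \sum_s c_s(x) b_s. Expanding the k-linear form of q in P(^k F)
   puts every q o P in one finite-dimensional space of functions on E, so
   finitely many of them span all: q o P = \sum_j l_j(q) (q_j o P). Hence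
   (q o P)^n lies in the span V of the products of n of the polynomials q_j o P,
   which belong to P(^{mnk} E). A finite-dimensional space V of functions has
   interpolation points x_s and functions mu_s in V with f = \sum_s f(x_s) mu_s
   for all f in V; for f = (q o P)^n this reads
   Delta^n_k P (q) = \sum_s (q (P x_s))^n mu_s, and evaluation at a point is
   bounded on P(^k F) by homogeneity. *)

Section MultilinearMaps.
Variables (K : numFieldType) (X Y : lmodType K) (j : nat).
Variable A : ('I_j -> X) -> Y.
Hypothesis A_ml : multilinear A.

Lemma multilinear_upd0 i v : A (upd v i 0) = 0.
Proof. by have := A_ml i v (-1) 0 0; rewrite scaler0 addr0 scaleN1r addNr. Qed.

Lemma multilinear_upd_sum i v (I : Type) (r : seq I) (c : I -> K) (b : I -> X) :
  A (upd v i (\sum_(s <- r) c s *: b s)) = \sum_(s <- r) c s *: A (upd v i (b s)).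
Proof.
elim: r => [|s r IHr]; first by rewrite !big_nil multilinear_upd0.
by rewrite !big_cons A_ml IHr.
Qed.

Lemma multilinear_expand (T : Type) (r : nat) (p : T -> X) (c : T -> 'I_r -> K)
    (b : 'I_r -> X) :
  (forall x, p x = \sum_s c x s *: b s) ->
  exists a : j.-tuple 'I_r -> Y,
    forall x, A (fun _ => p x) = \sum_(e : j.-tuple 'I_r) (\prod_(s <- e) c x s) *: a e.
Proof.
move=> p_span.
suff expand_prefix t : (t <= j)%N -> forall w, exists a : t.-tuple 'I_r -> Y,
    forall x, A (fun l => if (l < t)%N then p x else w l) =
      \sum_(e : t.-tuple 'I_r) (\prod_(s <- e) c x s) *: a e.
  have [a Ha] := expand_prefix j (leqnn j) (fun _ => 0).
  by exists a => x; rewrite -Ha; congr A; apply: funext => l; rewrite ltn_ord.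
elim: t => [|t IHt] ltj w.
  exists (fun _ => A w) => x.
  rewrite (eq_bigr (fun _ => A w)) => [|e _]; last by rewrite tuple0 big_nil scale1r.
  rewrite sumr_const card_tuple expn0.
  by congr A; apply: funext.
pose i := Ordinal ltj.
have [a Ha] := choice (fun s => IHt (ltnW ltj) (upd w i (b s))).
exists (fun e => a (thead e) [tuple of behead e]) => x.
have prefixS : (fun l : 'I_j => if (l < t.+1)%N then p x else w l) =
    upd (fun l => if (l < t)%N then p x else w l) i (p x).
  apply: funext => l; rewrite /upd; case: eqP => [->|/eqP]; first by rewrite /= ltnSn.
  by rewrite ltnS leq_eqVlt -val_eqE /=; case: (l == t :> nat).
have upd_prefix s : upd (fun l : 'I_j => if (l < t)%N then p x else w l) i (b s) =
    (fun l => if (l < t)%N then p x else upd w i (b s) l).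
  by apply: funext => l; rewrite /upd; case: eqP => [->|] //=; rewrite ltnn.
rewrite prefixS [X in upd _ _ X]p_span multilinear_upd_sum.
under eq_bigr do rewrite upd_prefix Ha scaler_sumr.
rewrite pair_big /=.
rewrite (reindex (fun e : t.+1.-tuple 'I_r => (thead e, [tuple of behead e]))) /=.
  apply: eq_bigr => e _; rewrite scalerA; congr (_ *: _).
  by rewrite [in RHS](tuple_eta e) big_cons.
exists (fun se : 'I_r * t.-tuple 'I_r => [tuple of se.1 :: se.2]) => [e _|[s e] _].
  by rewrite -tuple_eta.
by rewrite /= theadE; congr (_, _); apply: val_inj.
Qed.

End MultilinearMaps.

Lemma homogeneous_polyZ (K : numFieldType) (X Y : lmodType K) (j : nat) (P : X -> Y) :
  homogeneous_poly j P -> forall t x, P (t *: x) = t ^+ j *: P x.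
Proof.
move=> [A [A_ml P_A]] t x; rewrite !P_A.
have [a Ha] := multilinear_expand A_ml (p := fun s : K => s *: x) (c := fun s _ => s)
  (b := fun _ : 'I_1 => x) (fun s => esym (big_ord1 _ _)).
have prod_const s (e : j.-tuple 'I_1) : \prod_(i <- e) s = s ^+ j.
  by rewrite big_const_seq count_predT size_tuple iter_mulr_1.
have expand_at s : A (fun _ => s *: x) = s ^+ j *: \sum_e a e.
  by rewrite Ha scaler_sumr; apply: eq_bigr => e _; rewrite prod_const.
by rewrite expand_at -[x in A (fun _ => x)]scale1r expand_at expr1n scale1r.
Qed.

Lemma mxvec_index_inj (m n : nat) (i i' : 'I_m) (j j' : 'I_n) :
  mxvec_index i j = mxvec_index i' j' -> i = i' /\ j = j'.
Proof.
by rewrite /mxvec_index => /(congr1 val) /= /val_inj /enum_rank_inj [-> ->].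
Qed.

Lemma multilinear_comp (K : numFieldType) (X Y Z : lmodType K) (no ni : nat)
    (Ao : ('I_no -> Y) -> Z) (Ai : 'I_no -> ('I_ni -> X) -> Y) :
  multilinear Ao -> (forall i, multilinear (Ai i)) ->
  multilinear (fun w : 'I_(no * ni) -> X =>
    Ao (fun i => Ai i (fun l => w (mxvec_index i l)))).
Proof.
move=> Ao_ml Ai_ml p v a x y; case: (mxvec_indexP p) => i0 l0.
have upd_comp z :
    (fun i => Ai i (fun l => upd v (mxvec_index i0 l0) z (mxvec_index i l))) =
    upd (fun i => Ai i (fun l => v (mxvec_index i l))) i0
      (Ai i0 (upd (fun l => v (mxvec_index i0 l)) l0 z)).
  apply: funext => i; rewrite /upd; case: eqP => [->|i_neq].
    congr (Ai i0 _); apply: funext => l.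
    case: eqP => [/mxvec_index_inj [_ ->]|]; first by rewrite eqxx.
    by case: eqP => [->|].
  by congr (Ai i _); apply: funext => l; case: eqP => // /mxvec_index_inj [].
by rewrite !upd_comp Ai_ml Ao_ml.
Qed.

Lemma multilinear_prod (K : numFieldType) (n : nat) :
  multilinear (fun a : 'I_n -> K^o => \prod_i a i).
Proof.
have prod_upd v i (z : K^o) : \prod_l upd v i z l = z * \prod_(l | l != i) v l.
  rewrite (bigD1 i) //= /upd eqxx; congr (_ * _).
  by apply: eq_bigr => l /negbTE ->.
by move=> i v a x y; rewrite !prod_upd mulrDl -scalerAl.
Qed.

Lemma continuous_sumr (K : numFieldType) (T : topologicalType) (I : Type) (r : seq I)
    (f : I -> T -> K^o) :
  (forall i, continuous (f i)) -> continuous (fun x => \sum_(i <- r) f i x).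
Proof.
move=> f_cont; elim: r => [|s r IHr].
  under [X in continuous X]funext do rewrite big_nil.
  exact: cst_continuous.
under [X in continuous X]funext do rewrite big_cons.
by move=> x; apply: (continuousD (f_cont s x) (IHr x)).
Qed.

Lemma continuous_prodr (K : numFieldType) (T : topologicalType) (I : Type) (r : seq I)
    (f : I -> T -> K^o) :
  (forall i, continuous (f i)) -> continuous (fun x => \prod_(i <- r) f i x).
Proof.
move=> f_cont; elim: r => [|s r IHr].
  under [X in continuous X]funext do rewrite big_nil.
  exact: cst_continuous.
under [X in continuous X]funext do rewrite big_cons.
by move=> x; apply: (continuousM (f_cont s x) (IHr x)).
Qed.

Section ContinuousHomogeneousPolynomials.
Variables (K : numFieldType) (E : normedModType K).

Lemma cont_hpoly_comp (F G : normedModType K) (k m : nat) (q : F -> G) (P : E -> F) :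
  cont_hpoly k q -> cont_hpoly m P -> cont_hpoly (k * m) (fun x => q (P x)).
Proof.
move=> [[Aq [Aq_ml q_A]] q_cont] [[AP [AP_ml P_A]] P_cont]; split.
  exists (fun w => Aq (fun i => AP (fun l => w (mxvec_index i l)))).
  split; first exact: (multilinear_comp Aq_ml (fun _ => AP_ml)).
  by move=> x; rewrite q_A P_A.
by move=> x; exact: (continuous_comp (P_cont x) (q_cont (P x))).
Qed.

Lemma cont_hpoly_prod (n d : nat) (u : 'I_n -> E -> K^o) :
  (forall i, cont_hpoly d (u i)) -> cont_hpoly (n * d) (fun x => \prod_i u i x).
Proof.
move=> u_hpoly; have [Ai Ai_spec] := choice (fun i => (u_hpoly i).1).
split; last by apply: continuous_prodr => i; case: (u_hpoly i).
exists (fun w => \prod_i Ai i (fun l => w (mxvec_index i l))); split.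
  exact: (multilinear_comp (@multilinear_prod K n) (fun i => (Ai_spec i).1)).
by move=> x; apply: eq_bigr => i _; case: (Ai_spec i) => _ ->.
Qed.

Lemma cont_hpoly_lincomb (d : nat) (I : finType) (c : I -> K) (u : I -> E -> K^o) :
  (forall i, cont_hpoly d (u i)) -> cont_hpoly d (fun x => \sum_i c i * u i x).
Proof.
move=> u_hpoly; have [Ai Ai_spec] := choice (fun i => (u_hpoly i).1).
split.
  exists (fun w => \sum_i c i * Ai i w); split.
    move=> p v a x y; rewrite scaler_sumr -big_split /=; apply: eq_bigr => i _.
    case: (Ai_spec i) => Ai_ml _; rewrite Ai_ml.
    by rewrite /GRing.scale /= mulrDr !mulrA [c i * a]mulrC.
  by move=> x; apply: eq_bigr => i _; case: (Ai_spec i) => _ ->.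
apply: continuous_sumr => i x; apply: continuousM; first exact: cst_continuous.
by case: (u_hpoly i) => _; apply.
Qed.

End ContinuousHomogeneousPolynomials.

Lemma eval_Pk_dual (K : numFieldType) (F : normedModType K) (k : nat) (y : F) :
  Pk_dual k (fun q => q y).
Proof.
split=> //; have [y_le1|y_gt1] := boolP (`|y| <= 1).
  by exists 1; split=> // q M _ _ q_le; rewrite mul1r q_le.
have y_gt0 : 0 < `|y|.
  by rewrite normr_gt0; apply: contraNneq y_gt1 => ->; rewrite normr0 ler01.
exists (`|y| ^+ k); split=> [|q M [q_hpoly _] M_ge0 q_le]; first exact/exprn_ge0/ltW.
pose z := `|y|^-1 *: y.
have z_le1 : `|z| <= 1.
  by rewrite normrZ ger0_norm ?invr_ge0 ?(ltW y_gt0) // mulVf ?gt_eqF.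
have y_z : y = `|y| *: z by rewrite /z scalerA mulfV ?gt_eqF // scale1r.
rewrite [in q y]y_z (homogeneous_polyZ q_hpoly) normrM normrX normr_id.
by apply: ler_wpM2l; [exact/exprn_ge0/ltW | exact: q_le].
Qed.

Definition in_span (K : pzSemiRingType) (T : Type) (I : finType) (g : I -> T -> K)
    (f : T -> K) : Prop :=
  exists a : I -> K, f =1 fun t => \sum_i a i * g i t.

Lemma in_span_exp (K : comPzSemiRingType) (T : Type) (I : finType) (g : I -> T -> K)
    (f : T -> K) (n : nat) :
  in_span g f ->
  in_span (fun e : {ffun 'I_n -> I} => fun t => \prod_l g (e l) t) (fun t => f t ^+ n).
Proof.
move=> [a f_a]; exists (fun e : {ffun 'I_n -> I} => \prod_l a (e l)) => t.
rewrite f_a -[n in _ ^+ n]card_ord -prodr_const bigA_distr_bigA.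
by apply: eq_bigr => e _; rewrite big_split.
Qed.

Section FiniteSpans.
Variable K : fieldType.

Definition adjoin_last (X : Type) (N : nat) (xs : 'I_N -> X) (x : X) : 'I_N.+1 -> X :=
  fun i => oapp xs x (unlift ord_max i).

Lemma rank_adjoin_row (M N : nat) (X : Type) (a : X -> 'rV[K]_M) (xs : 'I_N -> X)
    (x : X) :
  ~~ (a x <= \matrix_i a (xs i))%MS ->
  (\rank (\matrix_i a (xs i)) < \rank (\matrix_i a (adjoin_last xs x i)))%N.
Proof.
move=> x_nspan; apply: rank_ltmx; rewrite ltmxE.
have row_adjoin i : (a (adjoin_last xs x i) <= \matrix_i a (adjoin_last xs x i))%MS.
  by rewrite -[X in (X <= _)%MS](rowK (fun i => a (adjoin_last xs x i))) row_sub.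
apply/andP; split.
  apply/row_subP => i; rewrite rowK.
  by have := row_adjoin (lift ord_max i); rewrite /adjoin_last liftK.
apply: contra x_nspan => /(submx_trans _)-> //.
by have := row_adjoin ord_max; rewrite /adjoin_last unlift_none.
Qed.

Lemma exists_spanning_rows (M : nat) (X : Type) (S : X -> Prop) (a : X -> 'rV[K]_M) :
  exists N (xs : 'I_N -> X), (forall i, S (xs i)) /\
    forall x, S x -> (a x <= \matrix_i a (xs i))%MS.
Proof.
suff: forall d N (xs : 'I_N -> X), (forall i, S (xs i)) ->
    (M - \rank (\matrix_i a (xs i)) <= d)%N ->
  exists N (xs : 'I_N -> X), (forall i, S (xs i)) /\
    forall x, S x -> (a x <= \matrix_i a (xs i))%MS.
  move=> spanning_from; have xs0 : 'I_0 -> X by case.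
  by apply: (spanning_from M 0 xs0); [case | rewrite leq_subr].
elim=> [|d IHd] N xs S_xs rank_xs;
  have [|/existsNP [x /not_implyP [Sx /negP x_nspan]]] :=
    pselect (forall x, S x -> (a x <= \matrix_i a (xs i))%MS); try by exists N, xs.
- have := rank_leq_col (\matrix_i a (adjoin_last xs x i)).
  by have := rank_adjoin_row x_nspan; lia.
- apply: (IHd N.+1 (adjoin_last xs x)).
    by move=> i; rewrite /adjoin_last; case: unlift.
  by have := rank_adjoin_row x_nspan; lia.
Qed.

Lemma in_span_subfamily (X T : Type) (I : finType) (g : I -> T -> K) (S : X -> Prop)
    (f : X -> T -> K) :
  (forall x, S x -> in_span g (f x)) ->
  exists N (xs : 'I_N -> X), (forall i, S (xs i)) /\
    forall x, S x -> in_span (fun i => f (xs i)) (f x).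
Proof.
move=> f_span.
have /choice [a f_a] : forall x, exists a : 'rV[K]_#|I|,
    S x -> f x =1 fun t => \sum_(i < #|I|) a 0 i * g (enum_val i) t.
  move=> x; have [/f_span [c f_c]|nSx] := pselect (S x); last by exists 0 => /nSx.
  exists (\row_i c (enum_val i)) => _ t.
  by rewrite f_c big_enum_val; apply: eq_bigr => i _; rewrite mxE.
have [N [xs [S_xs xs_span]]] := exists_spanning_rows S a.
exists N, xs; split=> // x Sx.
pose l := a x *m pinvmx (\matrix_i a (xs i)).
have a_l i : a x 0 i = \sum_j l 0 j * a (xs j) 0 i.
  rewrite -{1}(mulmxKpV (xs_span x Sx)) mxE.
  by apply: eq_bigr => j _; rewrite [X in _ * X]mxE.
exists (fun j => l 0 j) => t; rewrite f_a //.
under eq_bigr do rewrite a_l mulr_suml.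
rewrite exchange_big; apply: eq_bigr => j _ /=.
by rewrite f_a // mulr_sumr; apply: eq_bigr => i _; rewrite mulrA.
Qed.

Lemma in_span_interpolation (T : Type) (I : finType) (g : I -> T -> K) :
  exists N (ts : 'I_N -> T) (mu : 'I_N -> I -> K),
    forall f, in_span g f -> forall t, f t = \sum_s f (ts s) * \sum_i mu s i * g i t.
Proof.
pose a t : 'rV[K]_#|I| := \row_i g (enum_val i) t.
have [N [ts [_ ts_span]]] := exists_spanning_rows (fun _ => True) a.
pose B := \matrix_s a (ts s).
pose mu s i : K := pinvmx B (enum_rank i) s.
have g_interp t i : g i t = \sum_s (\sum_i' mu s i' * g i' t) * g i (ts s).
  have /matrixP/(_ 0 (enum_rank i)) := mulmxKpV (ts_span t Logic.I).
  rewrite !mxE enum_rankK => <-; apply: eq_bigr => s _.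
  rewrite !mxE enum_rankK; congr (_ * _).
  by rewrite [RHS]big_enum_val; apply: eq_bigr => i' _; rewrite /mu enum_valK !mxE mulrC.
exists N, ts, mu => f [c f_c] t.
rewrite f_c; under eq_bigr do rewrite g_interp mulr_sumr.
rewrite exchange_big; apply: eq_bigr => s _ /=.
by rewrite f_c mulr_suml; apply: eq_bigr => i _; rewrite mulrA mulrAC.
Qed.

End FiniteSpans.

Lemma homogeneous_poly_comp_in_span (K : numFieldType) (X : lmodType K) (T : Type)
    (k r : nat) (q : X -> K^o) (p : T -> X) (c : T -> 'I_r -> K) (b : 'I_r -> X) :
  homogeneous_poly k q -> (forall t, p t = \sum_s c t s *: b s) ->
  in_span (fun e : k.-tuple 'I_r => fun t => \prod_(s <- e) c t s) (fun t => q (p t)).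
Proof.
move=> [A [A_ml q_A]] p_span; have [a A_a] := multilinear_expand A_ml p_span.
by exists a => t; rewrite q_A A_a; apply: eq_bigr => e _; rewrite mulrC.
Qed.

Theorem mainTheorem12 (K : numFieldType) (E F : completeNormedModType K)
  (m : nat) (P : E -> F) :
  cont_hpoly m P -> finite_rank P ->
  forall k n : nat, Delta_finite_type m n k P.
Proof.
move=> P_hpoly [r [b P_span]] k n; have [c P_c] := choice P_span.
have /in_span_subfamily [N [qs [qs_Pk qs_span]]] :
    forall q, Pk k q ->
      in_span (fun e : k.-tuple 'I_r => fun x => \prod_(s <- e) c x s) (fun x => q (P x)).
  by move=> q [q_hpoly _]; apply: homogeneous_poly_comp_in_span q_hpoly P_c.
pose U (e : {ffun 'I_n -> 'I_N}) x : K^o := \prod_l qs (e l) (P x).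
have Delta_span q : Pk k q -> in_span U (Delta n P q).
  by move=> Pk_q; apply: in_span_exp (qs_span q Pk_q).
have [N' [xs [mu Delta_interp]]] := in_span_interpolation U.
exists N', (fun s q => q (P (xs s))), (fun s x => \sum_e mu s e * U e x).
split; first by move=> s; apply: eval_Pk_dual.
split=> [s|q Pk_q].
  rewrite (_ : m * n * k = n * (k * m))%N; last by rewrite [(m * n)%N]mulnC mulnAC mulnA.
  apply: cont_hpoly_lincomb => e; apply: cont_hpoly_prod => l.
  exact: (cont_hpoly_comp (qs_Pk (e l)) P_hpoly).
by apply: funext => x; rewrite (Delta_interp _ (Delta_span q Pk_q)).
Qed.
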